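(* Assume $\delta d_0>2$, let $t=d_0/2$, $\varepsilon_0=\frac{d_0}{2}-\frac1\delta$, and $\gamma=\left(1+\frac ct\right)^{-1}\frac{\delta d_0-1}{d_0-1}\alpha$. Let $G=(L\cup R,E)$ be a $(c,d,\alpha,\delta)$-bipartite expander with $L=[n]$, $C_0\subseteq\mathbb{F}_2^d$ a linear code of minimum distance $d_0$, $x\in\mathbb{F}_2^n$ and $y\in T(G,C_0)$ with $d_H(x,y)\le\gamma n$. Suppose $\mathsf{DeepFlip}(x)$ outputs some $x'\in\mathbb{F}_2^n$ (i.e., not $\perp$). Then $|F(x',y)|\le\frac{d_0-1}{\delta d_0-1}\gamma n$.
   Context: A bipartite graph is $(c,d)$-regular if left degrees are $c$ and right degrees $d$; $N(S)$ is the neighborhood of $S$. A $(c,d,\alpha,\delta)$-bipartite expander ($\alpha,\delta\in(0,1]$) is a $(c,d)$-regular bipartite graph with $|N(S)|\ge\delta c|S|$ for all $S\subseteq L$, $|S|\le\alpha|L|$. Tanner code: $L=[n]$, for each $v\in R$ a fixed ordering of $N(v)$ defines $x_{N(v)}\in\mathbb{F}_2^d$, and $T(G,C_0)=\{x:x_{N(v)}\in C_0\ \forall v\in R\}$. $F(x,y)=\{i\in[n]:x_i\ne y_i\}$; $U(x)=\{v\in R:x_{N(v)}\notin C_0\}$; $d_H$ is Hamming distance. $\mathsf{Decode}(z)$ is the codeword of $C_0$ closest to $z\in\mathbb{F}_2^d$, ties broken lexicographically. $W=\{\frac{i}{cd_0}:i\in\mathbb{Z},0\le i\le cd_0\}$.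 $\mathsf{DeterFlip}(x,q)$: set $p_1=\dots=p_n=0$; for each $v\in R$, let $w_v=\mathsf{Decode}(x_{N(v)})$; if $1\le d_H(w_v,x_{N(v)})<t$, let $i$ be the smallest element of $N(v)$ where $w_v$ and $x_{N(v)}$ differ and increase $p_i$ by $\frac{t-d_H(w_v,x_{N(v)})}{ct}$; then flip every $x_i$ with $p_i=q$ and return the result. $\mathsf{DeepFlip}(x)$: let $\varepsilon=\frac{\varepsilon_0\delta}{2ct^2}$ and $s=\left\lceil\log\left(\frac{\delta d_0-1}{2(d_0-1)}\right)/\log(1-\varepsilon)\right\rceil$; set $k_{\min}=|R|+1$, $x_{\min}=\perp$. For each $(q_1,\dots,q_s)\in(W\setminus\{0\})^s$: set $x^{(0)}=x$ and for $i=1,\dots,s$ set $x^{(i)}=\mathsf{DeterFlip}(x^{(i-1)},q_i)$; if $|U(x^{(i)})|>c\gamma n$ abandon this sequence; otherwise, if $i=s$ and $|U(x^{(s)})|<k_{\min}$, set $k_{\min}=|U(x^{(s)})|$ and $x_{\min}=x^{(s)}$. Return $x_{\min}$. *)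

From HB Require Import structures.
From mathcomp Require Import all_boot all_order all_algebra.
From mathcomp Require Import reals exp.
Set Implicit Arguments. Unset Strict Implicit. Unset Printing Implicit Defensive.
Import Order.TTheory GRing.Theory Num.Theory.
Local Open Scope ring_scope.

(* Words over F_2 are represented as boolean finite functions. *)
Notation word k := {ffun 'I_k -> bool}.

Definition dH k (x y : word k) : nat := #|[set i | x i != y i]|.

Definition Fset n (x y : word n) : {set 'I_n} := [set i | x i != y i].

(* ---------------- Bipartite graphs ----------------
   L = 'I_n, R = a finite type V.  For each right vertex v, nb v : 'I_d -> 'I_n
   is the fixed ordering of N(v) (injective, so |N(v)| = d). *)
Definition Nv n d V (nb : V -> 'I_d -> 'I_n) (v : V) : {set 'I_n} :=
  [set i | i \in codom (nb v)].

Definition NS n d (V : finType) (nb : V -> 'I_d -> 'I_n) (S : {set 'I_n}) : {set V} :=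
  [set v | [exists j, nb v j \in S]].

Definition cd_regular n d (V : finType) (nb : V -> 'I_d -> 'I_n) (c : nat) : Prop :=
  (forall v, injective (nb v)) /\
  (forall i : 'I_n, #|[set v | i \in Nv nb v]| = c).

Definition bip_expander (R : realType) n d (V : finType) (nb : V -> 'I_d -> 'I_n)
    (c : nat) (alpha delta : R) : Prop :=
  0 < alpha <= 1 /\ 0 < delta <= 1 /\ cd_regular nb c /\
  (forall S : {set 'I_n}, #|S|%:R <= alpha * n%:R ->
     delta * c%:R * #|S|%:R <= #|NS nb S|%:R).

Definition word0 k : word k := [ffun=> false].
Definition wadd k (x y : word k) : word k := [ffun i => x i (+) y i].

Definition linear_code k (C0 : {set word k}) : Prop :=
  word0 k \in C0 /\ (forall x y, x \in C0 -> y \in C0 -> wadd x y \in C0).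

Definition min_dist k (C0 : {set word k}) (d0 : nat) : Prop :=
  (exists x y, [/\ x \in C0, y \in C0, x != y & dH x y = d0]) /\
  (forall x y, x \in C0 -> y \in C0 -> x != y -> (d0 <= dH x y)%N).

Definition local n d V (nb : V -> 'I_d -> 'I_n) (x : word n) (v : V) : word d :=
  [ffun j => x (nb v j)].

Definition tanner n d (V : finType) (nb : V -> 'I_d -> 'I_n) (C0 : {set word d})
  : {set word n} := [set x | [forall v, local nb x v \in C0]].

Definition Uset n d (V : finType) (nb : V -> 'I_d -> 'I_n) (C0 : {set word d})
  (x : word n) : {set V} := [set v | local nb x v \notin C0].

Definition lexlt k (w w' : word k) : bool :=
  [exists i : 'I_k, [&& ~~ w i, w' i &
     [forall j : 'I_k, (j < i)%N ==> (w j == w' j)]]].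

Definition Decode k (C0 : {set word k}) (z : word k) : word k :=
  odflt z [pick w in C0 | [forall w' in C0,
      (dH w z < dH w' z)%N || ((dH w z == dH w' z) && ~~ lexlt w' w)]].

Section Algo.
Variables (R : realType) (n d : nat) (V : finType) (nb : V -> 'I_d -> 'I_n)
          (C0 : {set word d}) (c : nat) (t : R).

Definition wv (x : word n) (v : V) : word d := Decode C0 (local nb x v).
Definition dv (x : word n) (v : V) : nat := dH (wv x v) (local nb x v).

Definition Diff (x : word n) (v : V) : {set 'I_n} :=
  [set i | [exists j, (nb v j == i) && (wv x v j != local nb x v j)]].

Definition contributes (x : word n) (v : V) (i : 'I_n) : bool :=
  [&& (1 <= dv x v)%N, (dv x v)%:R < t, i \in Diff x v &
      [forall i' in Diff x v, (i <= i')%N]].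

Definition pval (x : word n) (i : 'I_n) : R :=
  \sum_(v | contributes x v i) ((t - (dv x v)%:R) / (c%:R * t)).

Definition DeterFlip (x : word n) (q : R) : word n :=
  [ffun i => if pval x i == q then ~~ x i else x i].

End Algo.

Definition inWnz (R : realType) (c d0 : nat) (q : R) : Prop :=
  exists k : nat, (1 <= k <= c * d0)%N /\ q = k%:R / (c * d0)%:R.

Definition s_param (R : realType) (c d0 : nat) (delta t eps0 : R) : nat :=
  let eps := eps0 * delta / (2 * c%:R * t ^+ 2) in
  `| Num.ceil (ln ((delta * d0%:R - 1) / (2 * (d0%:R - 1))) / ln (1 - eps)) |%N.

(* A sequence (q_1..q_s) is not abandoned: every x^(i), i = 1..s, has
   |U(x^(i))| <= c gamma n. *)
Definition valid_seq (R : realType) n d (V : finType) (nb : V -> 'I_d -> 'I_n)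
    (C0 : {set word d}) (c d0 : nat) (t gamma : R) (s : nat) (x : word n)
    (qs : seq R) : Prop :=
  size qs = s /\ (forall q, q \in qs -> inWnz c d0 q) /\
  (forall z, z \in scanl (DeterFlip nb C0 c t) x qs ->
     #|Uset nb C0 z|%:R <= c%:R * gamma * n%:R).

(* DeepFlip(x) outputs x' (not ⊥): x' = x^(s) for some non-abandoned sequence
   whose |U(x^(s))| is minimal among all non-abandoned sequences (this holds
   for whatever enumeration order of (W\{0})^s is used). *)
Definition DeepFlip_outputs (R : realType) n d (V : finType)
    (nb : V -> 'I_d -> 'I_n) (C0 : {set word d}) (c d0 : nat)
    (t gamma : R) (s : nat) (x x' : word n) : Prop :=
  exists qs, valid_seq nb C0 c d0 t gamma s x qs /\
    x' = foldl (DeterFlip nb C0 c t) x qs /\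
    (forall qs', valid_seq nb C0 c d0 t gamma s x qs' ->
       (#|Uset nb C0 x'| <= #|Uset nb C0 (foldl (DeterFlip nb C0 c t) x qs')|)%N).

From HB Require Import structures.
From mathcomp Require Import all_boot all_order all_algebra.
From mathcomp Require Import reals exp.
From mathcomp Require Import ring lra zify.
Import Order.TTheory GRing.Theory Num.Theory.
Set Implicit Arguments. Unset Strict Implicit. Unset Printing Implicit Defensive.
Local Open Scope ring_scope.

(* A correct bit is flipped only if some check [v] with [d_H(w_v, x_N(v)) < t]
   votes for it; then [w_v] and [y_N(v)] are distinct codewords, so [v] sees
   more than [d0 - t] errors.  Each check votes for one bit, hence a round
   flips at most [c |F| / (d0 - t)] correct bits and, for [t = d0/2], [|F|]
   grows by a factor at most [1 + c/t], which keeps it below [alpha n].  There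
   the expansion of [G] gives [(delta d0 - 1) c |F| <= (d0 - 1) |U|], because
   a satisfied neighbour of [F] sees at least [d0] errors and an unsatisfied
   one at least [1].  As a non-abandoned round has [|U| <= c gamma n], this
   restores [|F| <= (d0 - 1) / (delta d0 - 1) gamma n] after every round. *)

Lemma dH_refl k (a : word k) : dH a a = 0%N.
Proof. by apply/eqP; rewrite cards_eq0; apply/eqP/setP => i; rewrite !inE eqxx. Qed.

Lemma dH_triangle k (a b e : word k) : (dH a e <= dH a b + dH b e)%N.
Proof.
rewrite /dH; apply: leq_trans (leq_card_setU _ _).
apply: subset_leq_card; apply/subsetP => i; rewrite !inE.
by case: (a i); case: (b i); case: (e i).
Qed.

Lemma Decode_in k (C0 : {set word k}) (z : word k) :
  (0 < dH (Decode C0 z) z)%N -> Decode C0 z \in C0.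
Proof. by rewrite /Decode; case: pickP => [w /andP[]|_] //=; rewrite dH_refl. Qed.

Lemma markov_card (R : numDomainType) (T : finType) (f : T -> R) (a : R) :
  (forall x, 0 <= f x) -> a * #|[set x | a < f x]|%:R <= \sum_x f x.
Proof.
move=> f_ge0; rewrite mulr_natr -sumr_const.
rewrite [X in _ <= X](bigID (mem [set x | a < f x])) /=.
rewrite -[X in X <= _]addr0 lerD ?sumr_ge0 //.
by apply: ler_sum => x; rewrite inE => /ltW.
Qed.

Lemma foldl_invariant (T S : eqType) (f : T -> S -> T) (A : S -> Prop)
    (P Q : T -> Prop) (x : T) (s : seq S) :
  (forall z a, A a -> P z -> Q (f z a) -> P (f z a)) ->
  (forall a, a \in s -> A a) -> (forall z, z \in scanl f x s -> Q z) ->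
  P x -> P (foldl f x s).
Proof.
move=> step; elim: s x => [|a s IH] x //= As Qs Px.
apply: IH => [b bs|z zs|]; first exact/As/mem_behead.
  by apply: Qs; rewrite inE zs orbT.
by apply: step (Px) (Qs _ _); [apply: As; rewrite inE eqxx | rewrite inE eqxx].
Qed.

Lemma inWnz_neq0 (R : realType) c d0 (q : R) : inWnz c d0 q -> q != 0.
Proof.
move=> [k [/andP[k_gt0 k_le] ->]].
have cd0_gt0 : (0 < c * d0)%N by apply: leq_trans k_gt0 k_le.
by rewrite mulf_neq0 // ?invr_eq0 pnatr_eq0 -lt0n.
Qed.

Lemma sum_mem_card (T : finType) (P : pred T) (A : {pred T}) :
  (\sum_(x | P x) (x \in A) = #|[set x | P x && (x \in A)]|)%N.
Proof. by rewrite -sum1dep_card big_mkcondr; apply: eq_bigr => x _; case: (x \in A). Qed.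

Definition deg_in n d (V : finType) (nb : V -> 'I_d -> 'I_n) (S : {set 'I_n})
    (v : V) : nat :=
  #|[set j | nb v j \in S]|.

Lemma dH_local n d (V : finType) (nb : V -> 'I_d -> 'I_n) (z y : word n) v :
  dH (local nb z v) (local nb y v) = deg_in nb (Fset z y) v.
Proof. by apply: eq_card => j; rewrite !inE !ffunE. Qed.

Lemma sum_deg_in n d c (V : finType) (nb : V -> 'I_d -> 'I_n) (S : {set 'I_n}) :
  cd_regular nb c -> (\sum_v deg_in nb S v = c * #|S|)%N.
Proof.
case=> nb_inj left_deg.
have deg_inE v : deg_in nb S v = (\sum_(i in S) (i \in Nv nb v))%N.
  rewrite sum_mem_card /deg_in -(card_imset _ (nb_inj v)).
  apply: eq_card => i; rewrite !inE; apply/imsetP/andP.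
    by case=> j; rewrite inE => jS ->; split => //; apply: codom_f.
  by case=> iS /codomP [j ij]; exists j; rewrite // inE -ij.
under eq_bigr do rewrite deg_inE.
rewrite exchange_big /= mulnC -sum_nat_const; apply: eq_bigr => i _.
by rewrite -(left_deg i) sum_mem_card; apply: eq_card => v; rewrite !inE.
Qed.

Section ErrorGrowth.

Variables (R : realType) (n d c d0 : nat) (V : finType).
Variables (nb : V -> 'I_d -> 'I_n) (C0 : {set word d}) (t : R) (y : word n).
Hypotheses (regG : cd_regular nb c) (mdC0 : min_dist C0 d0).
Hypothesis (y_tanner : y \in tanner nb C0).

Let F z := Fset z y.
Let flip z q := DeterFlip nb C0 c t z q.
Let dist_C0 : forall a b, a \in C0 -> b \in C0 -> a != b -> (d0 <= dH a b)%N :=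
  proj2 mdC0.

Lemma local_tanner v : local nb y v \in C0.
Proof. by move: y_tanner; rewrite inE => /forallP. Qed.

Lemma satisfied_deg_in z v :
  v \in NS nb (F z) -> v \notin Uset nb C0 z -> (d0 <= deg_in nb (F z) v)%N.
Proof.
rewrite !inE negbK => /existsP [j jF] zv_C0.
rewrite -dH_local; apply: dist_C0 (local_tanner v) _ => //.
apply: contraTneq jF => /(congr1 (fun w : word d => w j)).
by rewrite !ffunE /F inE => ->; rewrite eqxx.
Qed.

Lemma card_NS_errors z : (0 < d0)%N ->
  (d0 * #|NS nb (F z)| <= c * #|F z| + (d0 - 1) * #|Uset nb C0 z|)%N.
Proof.
move=> d0_gt0; set N := NS nb (F z); set U := Uset nb C0 z.
rewrite -(sum_deg_in _ regG) mulnC -sum_nat_const.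
apply: (@leq_trans (\sum_(v in N) (deg_in nb (F z) v + (d0 - 1) * (v \in U)))%N).
  apply: leq_sum => v vN; case vU: (v \in U); last first.
    by rewrite muln0 addn0 satisfied_deg_in ?vU.
  suff : (0 < deg_in nb (F z) v)%N by lia.
  by move: vN; rewrite inE => /existsP [j jF]; apply/card_gt0P; exists j; rewrite inE.
rewrite big_split /= leq_add //; first by rewrite [X in (_ <= X)%N](bigID (mem N)) leq_addr.
rewrite -big_distrr leq_mul2l sum_mem_card orbC subset_leq_card //.
by apply/subsetP => v; rewrite inE => /andP[].
Qed.

Lemma expander_unsat (alpha delta : R) z :
  bip_expander nb c alpha delta -> (0 < d0)%N ->
  #|F z|%:R <= alpha * n%:R ->
  (delta * d0%:R - 1) * c%:R * #|F z|%:R <= (d0%:R - 1) * #|Uset nb C0 z|%:R.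
Proof.
case=> _ [_ [_ expansion]] d0_gt0 small.
have := card_NS_errors z d0_gt0; rewrite -(ler_nat R) !natrD !natrM natrB // => NS_le.
have := ler_wpM2l (ler0n R d0) (expansion _ small); nra.
Qed.

Lemma contributes_far z v i :
  contributes nb C0 t z v i -> z i = y i -> d0%:R - t < (deg_in nb (F z) v)%:R.
Proof.
case/and4P=> dv_gt0 dv_lt_t iD _ zi_yi.
have wv_C0 : wv nb C0 z v \in C0 by apply: Decode_in.
have wv_neq : wv nb C0 z v != local nb y v.
  move: iD; rewrite inE => /existsP [j /andP [/eqP nbj wj]].
  by apply: contra wj => /eqP ->; rewrite !ffunE nbj zi_yi.
have d0_le : (d0 <= dv nb C0 z v + deg_in nb (F z) v)%N.
  rewrite -dH_local; apply: leq_trans (dH_triangle _ (local nb z v) _).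
  exact: dist_C0 wv_C0 (local_tanner v) wv_neq.
move: d0_le; rewrite -(ler_nat R) natrD; lra.
Qed.

Lemma contributes_unique z v i i' :
  contributes nb C0 t z v i -> contributes nb C0 t z v i' -> i = i'.
Proof.
case/and4P=> _ _ iD /forall_inP i_min /and4P[_ _ i'D /forall_inP i'_min].
by apply: val_inj; apply/anti_leq; rewrite i_min ?i'_min.
Qed.

Lemma flipped_contributes z q i :
  q != 0 -> flip z q i != z i -> exists v, contributes nb C0 t z v i.
Proof.
move=> q_neq0; rewrite /flip /DeterFlip ffunE.
case: ifP => [/eqP p_eq _ | _]; last by rewrite eqxx.
case: (pickP (fun v => contributes nb C0 t z v i)) => [v|none]; first by exists v.
by move: q_neq0; rewrite -p_eq /pval big_pred0 ?eqxx.
Qed.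

Lemma card_new_errors z q : q != 0 ->
  (#|F (flip z q) :\: F z| <= #|[set v | (d0%:R - t < (deg_in nb (F z) v)%:R)%R]|)%N.
Proof.
move=> q_neq0; set K := [set v | _].
pose target v := [pick i | contributes nb C0 t z v i].
suff : Some @: (F (flip z q) :\: F z) \subset target @: K.
  move/subset_leq_card; rewrite card_imset; last exact: Some_inj.
  by move/leq_trans; apply; apply: leq_imset_card.
apply/subsetP => oi /imsetP [i]; rewrite /F !inE negbK => /andP [/eqP zi_yi fi_yi] ->.
have [|v vi] := @flipped_contributes z q i q_neq0; first by rewrite zi_yi.
apply/imsetP; exists v; first by rewrite inE (contributes_far vi).
rewrite /target; case: pickP => [i' /(contributes_unique vi) -> //|/(_ i)].
by rewrite vi.
Qed.

Hypothesis t_lt_d0 : t < d0%:R.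

Lemma card_errors_flip z q : q != 0 ->
  (d0%:R - t) * #|F (flip z q)|%:R <= (d0%:R - t + c%:R) * #|F z|%:R.
Proof.
move=> q_neq0.
have F_split : (#|F (flip z q)| <= #|F z| + #|F (flip z q) :\: F z|)%N.
  by rewrite -[X in (X <= _)%N](cardsID (F z)) leq_add2r subset_leq_card ?subsetIr.
have new_le : (d0%:R - t) * #|F (flip z q) :\: F z|%:R <= c%:R * #|F z|%:R.
  pose far := [set v | d0%:R - t < (deg_in nb (F z) v)%:R].
  apply: (@le_trans _ _ ((d0%:R - t) * #|far|%:R)).
    by rewrite ler_wpM2l ?subr_ge0 ?(ltW t_lt_d0) // ler_nat card_new_errors.
  apply: le_trans (markov_card _ _) _ => //.
  by rewrite -natrM -(sum_deg_in _ regG) natr_sum.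
move: F_split; rewrite -(ler_nat R) natrD => F_split.
have d0t_ge0 : 0 <= d0%:R - t by rewrite subr_ge0 ltW.
have := ler_wpM2l d0t_ge0 F_split; lra.
Qed.

Lemma errors_flip_le (alpha delta b : R) z q :
  bip_expander nb c alpha delta -> 1 < delta * d0%:R -> q != 0 ->
  #|F z|%:R <= b ->
  b * (d0%:R - t + c%:R) <= (d0%:R - t) * alpha * n%:R ->
  (d0%:R - 1) * #|Uset nb C0 (flip z q)|%:R <= (delta * d0%:R - 1) * c%:R * b ->
  #|F (flip z q)|%:R <= b.
Proof.
move=> expG dd0_gt1 q_neq0 Fz_le b_flip U_le.
have d0_gt0 : (0 < d0)%N.
  by rewrite lt0n; apply: contraTneq dd0_gt1 => ->; rewrite mulr0n mulr0 ltr10.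
have d0t_gt0 : 0 < d0%:R - t by rewrite subr_gt0.
have grow := card_errors_flip z q_neq0.
have grow_le : (d0%:R - t) * #|F (flip z q)|%:R <= (d0%:R - t + c%:R) * b.
  by apply: (le_trans grow); apply: ler_wpM2l Fz_le; rewrite addr_ge0 // ltW.
case: (posnP c) => [c0 | c_gt0].
  by move: grow_le; rewrite c0 addr0 ler_pM2l.
have small : #|F (flip z q)|%:R <= alpha * n%:R.
  by rewrite -(ler_pM2l d0t_gt0) mulrA; nra.
have := expander_unsat expG d0_gt0 small.
have : 0 < (delta * d0%:R - 1) * c%:R by rewrite mulr_gt0 ?subr_gt0 ?ltr0n.
nra.
Qed.

End ErrorGrowth.

Theorem lemma4p5 (R : realType) (n d c d0 : nat) (V : finType)
    (nb : V -> 'I_d -> 'I_n) (alpha delta : R) (C0 : {set word d})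
    (x y x' : word n) :
  let t : R := d0%:R / 2 in
  let eps0 : R := d0%:R / 2 - delta^-1 in
  let gamma : R := (1 + c%:R / t)^-1 * ((delta * d0%:R - 1) / (d0%:R - 1)) * alpha in
  let s := s_param c d0 delta t eps0 in
  2 < delta * d0%:R ->
  bip_expander nb c alpha delta ->
  linear_code C0 ->
  min_dist C0 d0 ->
  y \in tanner nb C0 ->
  (dH x y)%:R <= gamma * n%:R ->
  DeepFlip_outputs nb C0 c d0 t gamma s x x' ->
  #|Fset x' y|%:R <= (d0%:R - 1) / (delta * d0%:R - 1) * gamma * n%:R.
Proof.
move=> t eps0 gamma s dd0_gt2 expG _ mdC0 y_tanner dH_le [qs [[_ [qsW qsU]] [-> _]]].
have [/andP [alpha_gt0 _] [/andP [_ delta_le1] [regG _]]] := expG.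
have dd0_le : delta * d0%:R <= d0%:R by rewrite ler_piMl.
have d0_gt2 : 2 < d0%:R :> R by lra.
have t_gt0 : 0 < t by rewrite /t; lra.
have c_ge0 : 0 <= c%:R :> R by [].
have ct_gt0 : 0 < 1 + c%:R / t by have := divr_ge0 c_ge0 (ltW t_gt0); lra.
have gamma_ge0 : 0 <= gamma.
  by rewrite /gamma !mulr_ge0 ?invr_ge0 ?ltW //; lra.
set B := (d0%:R - 1) / (delta * d0%:R - 1) * gamma * n%:R.
have B_flip : B * (d0%:R - t + c%:R) = (d0%:R - t) * alpha * n%:R.
  by rewrite /B /gamma /t; field; apply/and4P; split; apply: lt0r_neq0; lra.
have B_unsat : (d0%:R - 1) * (c%:R * gamma * n%:R) = (delta * d0%:R - 1) * c%:R * B.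
  by rewrite /B; field; apply: lt0r_neq0; lra.
have B_init : #|Fset x y|%:R <= B.
  apply: le_trans dH_le _; rewrite /B -mulrA ler_peMl ?(mulr_ge0 gamma_ge0) //.
  by rewrite ler_pdivlMr ?mul1r; lra.
apply: (foldl_invariant (A := inWnz c d0) (P := fun z => #|Fset z y|%:R <= B)
  (Q := fun z => #|Uset nb C0 z|%:R <= c%:R * gamma * n%:R)) B_init => //.
move=> z q /inWnz_neq0 q_neq0 Fz_le U_le.
apply: (errors_flip_le regG mdC0 y_tanner _ expG) => //.
- by rewrite /t; lra.
- lra.
- by rewrite B_flip.
- by rewrite -B_unsat ler_wpM2l // subr_ge0; lra.
Qed.
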